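(* Let $G$ be a $\lambda$-graph and $Q$ a query over $G$. Then $Q^{\Downarrow}$ is a bisimulation if and only if $Q^{\#}$ is a bisimulation.
   Context: A pre-$\lambda$-graph is a directed graph whose nodes are of four kinds: an application node $@(n_1,n_2)$ has exactly two children, its left child $n_1$ and its right child $n_2$; an abstraction node $\lambda(n)$ has exactly one child, its body $n$; a free variable node has no children and carries an atom $\mathrm{id}(n)$ from a fixed set of atoms, distinct free variable nodes carrying distinct atoms; a bound variable node $\mathrm{var}(l)$ has exactly one outgoing binding edge, to an abstraction node $l$ (its binder). A trace is a finite sequence of directions from $\{\swarrow,\downarrow,\searrow\}$; $\epsilon$ is the empty trace and $d\cdot\tau$ is the trace $\tau$ extended by one final step $d$. Paths $n\xrightarrow{\tau}m$ are defined inductively: $n\xrightarrow{\epsilon}n$; if $n\xrightarrow{\tau}\lambda(m)$ then $n\xrightarrow{\downarrow\cdot\tau}m$; if $n\xrightarrow{\tau}@(m_1,m_2)$ then $n\xrightarrow{\swarrow\cdot\tau}m_1$ and $n\xrightarrow{\searrow\cdot\tau}m_2$ (binding edges are never followed). The path $n\xrightarrow{\tau}$ crosses a node $m$ if either $n\xrightarrow{\tau}m$, or $\tau=d\cdot\tau'$ and $n\xrightarrow{\tau'}$ crosses $m$. A root is a node $r$ such that the only path ending in $r$ has the empty trace. A node $m$ dominates $n$ if every path from a root to $n$ crosses $m$. A $\lambda$-graph is a pre-$\lambda$-graph that has finitely many nodes, is acyclic ($n\xrightarrow{\tau}n$ holds only for $\tau=\epsilon$), and is dominated (every bound variable node $\mathrm{var}(l)$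 is dominated by its binder $l$). Two nodes are homogeneous if both are application nodes, or both abstraction nodes, or both free variable nodes, or both bound variable nodes; a binary relation $R$ on nodes is homogeneous if it only relates homogeneous nodes. Rules: $(\swarrow)$: $@(n_1,n_2)\,R\,@(m_1,m_2)$ implies $n_1\,R\,m_1$; $(\searrow)$: $@(n_1,n_2)\,R\,@(m_1,m_2)$ implies $n_2\,R\,m_2$; $(\downarrow)$: $\lambda(n)\,R\,\lambda(m)$ implies $n\,R\,m$; $(\circlearrowright)$: $\mathrm{var}(n)\,R\,\mathrm{var}(m)$ implies $n\,R\,m$. $R$ is propagated if closed under $(\swarrow),(\downarrow),(\searrow)$. A bisimulation is a homogeneous propagated relation closed also under $(\circlearrowright)$. $R^{\Downarrow}$ (propagation) is the smallest propagated relation containing $R$; $R^{\#}$ (spreading) is the smallest propagated equivalence relation containing $R$. A query over $G$ is a binary relation on the roots of $G$. *)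

From mathcomp Require Import all_boot.
Set Implicit Arguments. Unset Strict Implicit. Unset Printing Implicit Defensive.

Inductive node (V A : Type) : Type :=
  | App  of V & V
  | Abs  of V
  | Fvar of A
  | Bvar of V.        (* bound variable var(l), binding edge to l *)

Arguments App {V A}. Arguments Abs {V A}. Arguments Fvar {V A}. Arguments Bvar {V A}.

Inductive dir := SW | DOWN | SE.
(* A trace; the head of the list is the LAST step: d :: tau  is  d . tau *)
Definition trace := list dir.

Section Graph.
Variables (V A : Type) (lab : V -> node V A).

Definition pre_lambda_graph : Prop :=
  (forall v l, lab v = Bvar l -> exists b, lab l = Abs b) /\
  (forall v w a, lab v = Fvar a -> lab w = Fvar a -> v = w).

Inductive path (n : V) : trace -> V -> Prop :=
  | path_nil : path n nil n
  | path_down tau m b : path n tau m -> lab m = Abs b -> path n (DOWN :: tau) b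
  | path_sw tau m m1 m2 : path n tau m -> lab m = App m1 m2 -> path n (SW :: tau) m1
  | path_se tau m m1 m2 : path n tau m -> lab m = App m1 m2 -> path n (SE :: tau) m2.

Fixpoint crosses (n : V) (tau : trace) (m : V) : Prop :=
  path n tau m \/ match tau with nil => False | _ :: tau' => crosses n tau' m end.

Definition root (r : V) : Prop := forall n tau, path n tau r -> tau = nil.

Definition dominates (m n : V) : Prop :=
  forall r tau, root r -> path r tau n -> crosses r tau m.

Definition acyclic : Prop := forall n tau, path n tau n -> tau = nil.

Definition dominated : Prop := forall v l, lab v = Bvar l -> dominates l v.

(* Finiteness is provided by V being a finType in the statement. *)
Definition lambda_graph : Prop := pre_lambda_graph /\ acyclic /\ dominated.

Definition homogeneous_nodes (n m : V) : Prop :=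
  match lab n, lab m with
  | App _ _, App _ _ | Abs _, Abs _ | Fvar _, Fvar _ | Bvar _, Bvar _ => True
  | _, _ => False
  end.

Definition homogeneous (R : V -> V -> Prop) : Prop :=
  forall n m, R n m -> homogeneous_nodes n m.

Definition propagated (R : V -> V -> Prop) : Prop :=
  (forall n m n1 n2 m1 m2, R n m -> lab n = App n1 n2 -> lab m = App m1 m2 -> R n1 m1) /\
  (forall n m n1 n2 m1 m2, R n m -> lab n = App n1 n2 -> lab m = App m1 m2 -> R n2 m2) /\
  (forall n m n' m', R n m -> lab n = Abs n' -> lab m = Abs m' -> R n' m').

Definition var_closed (R : V -> V -> Prop) : Prop :=
  forall n m l l', R n m -> lab n = Bvar l -> lab m = Bvar l' -> R l l'.

Definition bisimulation (R : V -> V -> Prop) : Prop :=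
  homogeneous R /\ propagated R /\ var_closed R.

(* R^{Downarrow}: smallest propagated relation containing R *)
Inductive propagation (R : V -> V -> Prop) : V -> V -> Prop :=
  | pr_base n m : R n m -> propagation R n m
  | pr_sw n m n1 n2 m1 m2 : propagation R n m -> lab n = App n1 n2 -> lab m = App m1 m2 ->
      propagation R n1 m1
  | pr_se n m n1 n2 m1 m2 : propagation R n m -> lab n = App n1 n2 -> lab m = App m1 m2 ->
      propagation R n2 m2
  | pr_down n m n' m' : propagation R n m -> lab n = Abs n' -> lab m = Abs m' ->
      propagation R n' m'.

(* R^#: smallest propagated equivalence relation containing R *)
Inductive spreading (R : V -> V -> Prop) : V -> V -> Prop :=
  | sp_base n m : R n m -> spreading R n m
  | sp_refl n : spreading R n n
  | sp_sym n m : spreading R n m -> spreading R m n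
  | sp_trans n m k : spreading R n m -> spreading R m k -> spreading R n k
  | sp_sw n m n1 n2 m1 m2 : spreading R n m -> lab n = App n1 n2 -> lab m = App m1 m2 ->
      spreading R n1 m1
  | sp_se n m n1 n2 m1 m2 : spreading R n m -> lab n = App n1 n2 -> lab m = App m1 m2 ->
      spreading R n2 m2
  | sp_down n m n' m' : spreading R n m -> lab n = Abs n' -> lab m = Abs m' ->
      spreading R n' m'.

Definition query (Q : V -> V -> Prop) : Prop :=
  forall n m, Q n m -> root n /\ root m.

End Graph.

(* (⇒) Q^# is the reflexive-symmetric-transitive closure of Q^⇓ as soon as
   Q^⇓ is homogeneous, because the equivalence closure of a homogeneous
   propagated relation is still propagated.  Closing a bisimulation under
   equivalence keeps it a bisimulation, so Q^# is one.
   (⇐) Q^⇓ ⊆ Q^# inherits homogeneity and is propagated by construction; the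
   point is the binder rule.  Two nodes related by Q^⇓ are reached by the same
   trace τ from two roots related by Q.  By domination, the binders l, l' of
   two related variable nodes lie on these paths, at suffixes τ1, τ2 of τ;
   say τ1 = γ ++ τ2.  The node x reached by τ2 is Q^⇓-related to l' and
   hence Q^#-related to l, and l lies γ below x.  In a finite acyclic graph a
   homogeneous propagated relation never relates a node to a strict descendant
   (following the path would descend forever), so γ is empty and x = l. *)
From Pilot Require Import Defs.
From Stdlib Require Import Relation_Operators ClassicalDescription.
From mathcomp Require Import all_boot.
Set Implicit Arguments. Unset Strict Implicit.

Lemma cat_suffix_cases (T : Type) (alpha beta t1 t2 : seq T) :
  alpha ++ t1 = beta ++ t2 ->
  (exists g, t1 = g ++ t2) \/ (exists g, t2 = g ++ t1).
Proof.
elim: alpha beta => [|a al IH] [|b be] /= E.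
- by left; exists [::].
- by left; exists (b :: be).
- by right; exists (a :: al).
- by case: E => _ /IH.
Qed.

Definition classic_bool (P : Prop) : bool :=
  if excluded_middle_informative P then true else false.

Lemma classic_boolP (P : Prop) : classic_bool P = true <-> P.
Proof. by rewrite /classic_bool; case: excluded_middle_informative. Qed.

Section Paths.
Variables (V A : Type) (lab : V -> node V A).

Local Notation path := (Defs.path lab).

(* Paths compose; recall that traces list their last step first. *)
Lemma path_cat n tau m sigma k :
  path n tau m -> path m sigma k -> path n (sigma ++ tau) k.
Proof.
move=> Pnm; elim=> {k sigma} [|s m' b _ IH Hl|s m' m1 m2 _ IH Hl|s m' m1 m2 _ IH Hl].
- exact: Pnm.
- exact: path_down IH Hl.
- exact: path_sw IH Hl.
- exact: path_se IH Hl.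
Qed.

Lemma path_split n alpha tau m :
  path n (alpha ++ tau) m -> exists x, path n tau x /\ path x alpha m.
Proof.
elim: alpha m => [|d al IH] m /= P; first by exists m; split=> //; apply: path_nil.
inversion P as [|t k b P' E|t k m1 m2 P' E|t k m1 m2 P' E]; subst;
  have [x [Pnx Pxk]] := IH _ P'; exists x; split=> //.
- exact: path_down Pxk E.
- exact: path_sw Pxk E.
- exact: path_se Pxk E.
Qed.

Lemma path_nil_eq n m : path n [::] m -> n = m.
Proof. by move=> P; inversion P. Qed.

Lemma crosses_split n tau m :
  crosses lab n tau m -> exists alpha tau1, tau = alpha ++ tau1 /\ path n tau1 m.
Proof.
elim: tau => [|d t IH] /= [P|Pt] //; first by exists [::], [::].
- by exists [::], (d :: t).
- by have [al [t1 [-> P]]] := IH Pt; exists (d :: al), t1.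
Qed.

Lemma propagation_propagated Q : propagated lab (propagation lab Q).
Proof. by split; [|split]; [apply: pr_sw|apply: pr_se|apply: pr_down]. Qed.

Lemma propagation_sub_spreading Q n m :
  propagation lab Q n m -> spreading lab Q n m.
Proof.
elim=> {n m} [n m|n m n1 n2 m1 m2 _ IH H1 H2|n m n1 n2 m1 m2 _ IH H1 H2|n m n' m' _ IH H1 H2].
- exact: sp_base.
- exact: sp_sw IH H1 H2.
- exact: sp_se IH H1 H2.
- exact: sp_down IH H1 H2.
Qed.

Lemma propagation_paths Q n m : propagation lab Q n m ->
  exists r r' tau, Q r r' /\ path r tau n /\ path r' tau m.
Proof.
elim=> {n m} [n m Qnm|n m n1 n2 m1 m2 _ [r [r' [t [Qr [P P']]]]] H1 H2
  |n m n1 n2 m1 m2 _ [r [r' [t [Qr [P P']]]]] H1 H2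
  |n m n' m' _ [r [r' [t [Qr [P P']]]]] H1 H2].
- by exists n, m, [::]; split=> //; split; apply: path_nil.
- by exists r, r', (SW :: t); split=> //; split; [apply: path_sw P H1|apply: path_sw P' H2].
- by exists r, r', (SE :: t); split=> //; split; [apply: path_se P H1|apply: path_se P' H2].
- by exists r, r', (DOWN :: t); split=> //; split; [apply: path_down P H1|apply: path_down P' H2].
Qed.

Lemma paths_propagation Q r r' tau x x' :
  Q r r' -> path r tau x -> path r' tau x' -> propagation lab Q x x'.
Proof.
move=> Qr P; elim: P x' => {tau x} [|s m b _ IH Hl|s m m1 m2 _ IH Hl|s m m1 m2 _ IH Hl] x' P';
  inversion P' as [|t k b' Pk E|t k k1 k2 Pk E|t k k1 k2 Pk E]; subst.
- exact: pr_base.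
- exact: pr_down (IH _ Pk) Hl E.
- exact: pr_sw (IH _ Pk) Hl E.
- exact: pr_se (IH _ Pk) Hl E.
Qed.

Lemma propagated_path_transfer R : homogeneous lab R -> propagated lab R ->
  forall x x' s y, R x x' -> path x s y -> exists y', path x' s y' /\ R y y'.
Proof.
move=> Hh [Hsw [Hse Hd]] x x' s y Rx; elim=> {s y}
  [|s m b _ [y' [P Ry]] Hl|s m m1 m2 _ [y' [P Ry]] Hl|s m m1 m2 _ [y' [P Ry]] Hl].
- by exists x'; split=> //; apply: path_nil.
- move: (Hh _ _ Ry); rewrite /homogeneous_nodes Hl; case E: (lab y') => // [b'] _.
  by exists b'; split; [apply: path_down P E|apply: Hd Ry Hl E].
- move: (Hh _ _ Ry); rewrite /homogeneous_nodes Hl; case E: (lab y') => // [c d] _.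
  by exists c; split; [apply: path_sw P E|apply: Hsw Ry Hl E].
- move: (Hh _ _ Ry); rewrite /homogeneous_nodes Hl; case E: (lab y') => // [c d] _.
  by exists d; split; [apply: path_se P E|apply: Hse Ry Hl E].
Qed.

End Paths.

Section FiniteGraph.
Variables (V : finType) (A : Type) (lab : V -> node V A).

Local Notation path := (Defs.path lab).

(* The strict descendants of a node; they decrease strictly along nonempty
   paths of an acyclic graph, which yields a well-founded measure. *)
Definition strict_desc (x : V) : {set V} :=
  [set z | classic_bool (exists s, s <> [::] /\ path x s z)].

Lemma strict_desc_lt x s y : acyclic lab -> path x s y -> s <> [::] ->
  #|strict_desc y| < #|strict_desc x|.
Proof.
move=> Hac Pxy ne; apply/proper_card/properP; split.
- apply/subsetP => z; rewrite !inE => /classic_boolP [s' [ne' Pyz]].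
  apply/classic_boolP; exists (s' ++ s); split; last exact: path_cat Pxy Pyz.
  by case: s' ne' {Pyz}.
- exists y; rewrite !inE; first by apply/classic_boolP; exists s.
  by apply/negP => /classic_boolP [s' [ne' /Hac]].
Qed.

(* In a finite acyclic graph a homogeneous propagated relation never relates a
   node to a strict descendant: transferring the path would descend forever. *)
Lemma related_descendant_nil R : acyclic lab -> homogeneous lab R -> propagated lab R ->
  forall x y s, R x y -> path x s y -> s = [::].
Proof.
move=> Hac Hh Hp x y [//|d t] Rxy Pxy; exfalso.
have ne : d :: t <> [::] by [].
suff no_chain : forall k x y, #|strict_desc x| <= k -> R x y -> path x (d :: t) y -> False.
  exact: no_chain _ _ _ (leqnn _) Rxy Pxy.
elim=> [|k IH] x0 y0 Hk R0 P0; have lt := strict_desc_lt Hac P0 ne.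
- by move: (leq_trans lt Hk).
- have [y' [P' R']] := propagated_path_transfer Hh Hp R0 P0.
  by apply: (IH y0 y') => //; rewrite -ltnS (leq_trans lt Hk).
Qed.

Lemma propagation_var_closed Q : acyclic lab -> dominated lab -> query lab Q ->
  bisimulation lab (spreading lab Q) -> var_closed lab (propagation lab Q).
Proof.
move=> Hac Hdom HQ [Hh [Hp Hv]] n m l l' Pnm En Em.
have Sll' : spreading lab Q l l' := Hv _ _ _ _ (propagation_sub_spreading Pnm) En Em.
have [r [r' [t [Qr [Prn Pr'm]]]]] := propagation_paths Pnm.
have [root_r root_r'] := HQ _ _ Qr.
have [al [t1 [Et Prl]]] := crosses_split (Hdom _ _ En _ _ root_r Prn).
have [be [t2 [Et' Pr'l']]] := crosses_split (Hdom _ _ Em _ _ root_r' Pr'm).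
rewrite {}Et in Et'.
have descent_trivial := related_descendant_nil Hac Hh Hp.
case: (cat_suffix_cases Et') => [[g Et1]|[g Et2]].
- subst t1; have [x [Prx Pxl]] := path_split Prl.
  have Pxl' := paths_propagation Qr Prx Pr'l'.
  have Sxl : spreading lab Q x l :=
    sp_trans (propagation_sub_spreading Pxl') (sp_sym Sll').
  have g_nil := descent_trivial _ _ _ Sxl Pxl; subst g.
  by rewrite -(path_nil_eq Pxl).
- subst t2; have [x [Pr'x Pxl']] := path_split Pr'l'.
  have Plx := paths_propagation Qr Prl Pr'x.
  have Sxl' : spreading lab Q x l' :=
    sp_trans (sp_sym (propagation_sub_spreading Plx)) Sll'.
  have g_nil := descent_trivial _ _ _ Sxl' Pxl'; subst g.
  by rewrite -(path_nil_eq Pxl').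
Qed.

End FiniteGraph.

Section EquivalenceClosure.
Variables (V A : Type) (lab : V -> node V A).

Local Notation closure := (clos_refl_sym_trans V).

(* Homogeneity is an equivalence on nodes, so it survives equivalence closure. *)
Lemma closure_homogeneous R : homogeneous lab R -> homogeneous lab (closure R).
Proof.
rewrite /homogeneous /homogeneous_nodes => Hh n m.
elim=> {n m} [n m /Hh //|n|n m _|n m k _ IH1 _ IH2]; first by case: (lab n).
- by case: (lab n); case: (lab m).
- by move: IH1 IH2; case: (lab n); case: (lab m); case: (lab k).
Qed.

Section Propagated.
Variable R : V -> V -> Prop.
Hypotheses (Hh : homogeneous lab R) (Hp : propagated lab R).

(* The middle node of a transitivity step has the same kind as its ends, so
   children of related application/abstraction nodes remain related. *)
Lemma closure_app n m : closure R n m -> forall n1 n2 m1 m2,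
  lab n = App n1 n2 -> lab m = App m1 m2 -> closure R n1 m1 /\ closure R n2 m2.
Proof.
have [Hsw [Hse _]] := Hp.
elim=> {n m} [n m Rnm|n|n m _ IH|n m k Cnm IH1 _ IH2] n1 n2 m1 m2 En Em.
- by split; apply: rst_step; [apply: Hsw Rnm En Em|apply: Hse Rnm En Em].
- by move: Em; rewrite En => -[<- <-]; split; apply: rst_refl.
- by have [C1 C2] := IH _ _ _ _ Em En; split; apply: rst_sym.
- move: (closure_homogeneous Hh Cnm); rewrite /homogeneous_nodes En.
  case Ek: (lab m) => // [c d] _.
  have [C1 C2] := IH1 _ _ _ _ En Ek; have [D1 D2] := IH2 _ _ _ _ Ek Em.
  by split; [apply: rst_trans C1 D1|apply: rst_trans C2 D2].
Qed.

Lemma closure_abs n m : closure R n m -> forall n' m',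
  lab n = Abs n' -> lab m = Abs m' -> closure R n' m'.
Proof.
have [_ [_ Hd]] := Hp.
elim=> {n m} [n m Rnm|n|n m _ IH|n m k Cnm IH1 _ IH2] n' m' En Em.
- exact/rst_step/(Hd _ _ _ _ Rnm En Em).
- by move: Em; rewrite En => -[<-]; apply: rst_refl.
- exact/rst_sym/(IH _ _ Em En).
- move: (closure_homogeneous Hh Cnm); rewrite /homogeneous_nodes En.
  case Ek: (lab m) => // [c] _.
  exact: rst_trans (IH1 _ _ En Ek) (IH2 _ _ Ek Em).
Qed.

Lemma closure_propagated : propagated lab (closure R).
Proof.
split; [|split].
- by move=> n m n1 n2 m1 m2 C En Em; case: (closure_app C En Em).
- by move=> n m n1 n2 m1 m2 C En Em; case: (closure_app C En Em).
- by move=> n m n' m' C En Em; apply: closure_abs C n' m' En Em.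
Qed.

End Propagated.

Lemma closure_var_closed R : homogeneous lab R -> var_closed lab R ->
  var_closed lab (closure R).
Proof.
move=> Hh Hv n m l l' C; elim: C l l' => {n m}
  [n m Rnm|n|n m _ IH|n m k Cnm IH1 _ IH2] l l' En Em.
- exact/rst_step/(Hv _ _ _ _ Rnm En Em).
- by move: Em; rewrite En => -[<-]; apply: rst_refl.
- exact/rst_sym/(IH _ _ Em En).
- move: (closure_homogeneous Hh Cnm); rewrite /homogeneous_nodes En.
  case Ek: (lab m) => // [c] _.
  exact: rst_trans (IH1 _ _ En Ek) (IH2 _ _ Ek Em).
Qed.

Lemma closure_bisimulation R : bisimulation lab R -> bisimulation lab (closure R).
Proof.
move=> [Hh [Hp Hv]]; split; [|split].
- exact: closure_homogeneous.
- exact: closure_propagated.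
- exact: closure_var_closed.
Qed.

Lemma spreading_closure_propagation Q : homogeneous lab (propagation lab Q) ->
  forall n m, spreading lab Q n m <-> closure (propagation lab Q) n m.
Proof.
move=> Hh n m; split.
- have Cp := closure_propagated Hh (propagation_propagated lab Q).
  elim=> {n m} [n m Qnm|n|n m _ IH|n m k _ IH1 _ IH2
    |n m n1 n2 m1 m2 _ IH En Em|n m n1 n2 m1 m2 _ IH En Em|n m n' m' _ IH En Em].
  + exact/rst_step/pr_base.
  + exact: rst_refl.
  + exact: rst_sym.
  + exact: rst_trans IH1 IH2.
  + exact: Cp.1 _ _ _ _ _ _ IH En Em.
  + exact: Cp.2.1 _ _ _ _ _ _ IH En Em.
  + exact: Cp.2.2 _ _ _ _ IH En Em.
- elim=> {n m} [n m|n|n m _|n m k _ IH1 _ IH2].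
  + exact: propagation_sub_spreading.
  + exact: sp_refl.
  + exact: sp_sym.
  + exact: sp_trans IH1 IH2.
Qed.

Lemma bisimulation_ext R S : (forall n m, R n m <-> S n m) ->
  bisimulation lab R -> bisimulation lab S.
Proof.
move=> RS [Hh [[Hsw [Hse Hd]] Hv]]; split; [|split; [split; [|split]|]].
- by move=> n m /RS /Hh.
- by move=> n m n1 n2 m1 m2 /RS Rnm En Em; apply/RS/(Hsw _ _ _ _ _ _ Rnm En Em).
- by move=> n m n1 n2 m1 m2 /RS Rnm En Em; apply/RS/(Hse _ _ _ _ _ _ Rnm En Em).
- by move=> n m n' m' /RS Rnm En Em; apply/RS/(Hd _ _ _ _ Rnm En Em).
- by move=> n m l l' /RS Rnm En Em; apply/RS/(Hv _ _ _ _ Rnm En Em).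
Qed.

End EquivalenceClosure.

Theorem mainTheorem13 (V : finType) (A : Type) (lab : V -> node V A)
  (Q : V -> V -> Prop) :
  lambda_graph lab -> query lab Q ->
  (bisimulation lab (propagation lab Q) <-> bisimulation lab (spreading lab Q)).
Proof.
move=> [_ [Hac Hdom]] HQ; split.
- move=> Bprop; apply: bisimulation_ext (closure_bisimulation Bprop).
  by move=> n m; rewrite spreading_closure_propagation //; case: Bprop.
- move=> Bsp; split; [|split].
  + by case: Bsp => Hh _ n m Pnm; apply: Hh (propagation_sub_spreading Pnm).
  + exact: propagation_propagated.
  + exact: propagation_var_closed.
Qed.
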